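(* Let $B$ be a finitely realizable hypergroup and $A$ a normal sub-hypergroup of $B$. Then $A$ and the quotient hypergroup $B/A$ are finitely realizable.
   Context: A hypergroup is a nonempty set $H$ with $*:H\times H\to P^*(H)$ (nonempty subsets), extended to subsets by unions, which is associative, has a unique identity $e$, unique inverses $h^{-1}$ with $e\in(h^{-1}*h)\cap(h*h^{-1})$, and is reversible ($c\in a*b\Rightarrow a\in c*b^{-1},\ b\in a^{-1}*c$). A sub-hypergroup is a subset which is a hypergroup under the restricted hyperoperation; it is normal, $A$ say, if $bA=Ab$ for all $b\in B$ (with $bA=\{b\}*A$). The quotient $B/A$ is the hypergroup on the cosets $\{bA:b\in B\}$ with $(xA)(yA)=\{zA: z\in xA*yA\}$. For a nonempty set $X$: $1_X$ is the diagonal, $p^*=\{(a,b):(b,a)\in p\}$, $xp=\{y:(x,y)\in p\}$. An association scheme on $X$ is a partition $S$ of $X\times X$ with $1_X\in S$, closed under $p\mapsto p^*$, such that for all $p,q,r\in S$ there is a cardinal $a_{pq}^r$ with $|yp\cap zq^*|=a_{pq}^r$ for all $y\in X$, $z\in yr$. $\mathbf{H}(S)$ is the hypergroup on $S$ with $p*q=\{r: a_{pq}^r\ge1\}$, identity $1_X$, inverse $p^*$. A hypergroup is finitely realizable if it is isomorphic to $\mathbf{H}(S)$ for an association scheme $S$ on a finite set. *)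

From mathcomp Require Import all_boot.
Set Implicit Arguments. Unset Strict Implicit. Unset Printing Implicit Defensive.

Section Hypergroups.
Variable T : Type.

(* A hyperoperation is a relation [mul x y z] meaning "z is in x * y".
   A hypergroup is a carrier [H : T -> Prop] with such a hyperoperation. *)

Definition hg_assoc (H : T -> Prop) (mul : T -> T -> T -> Prop) :=
  forall x y z, H x -> H y -> H z -> forall w,
    (exists u, mul x y u /\ mul u z w) <-> (exists v, mul y z v /\ mul x v w).

Definition hg_identity (H : T -> Prop) (mul : T -> T -> T -> Prop) (e : T) :=
  H e /\ forall x, H x -> forall w, (mul e x w <-> w = x) /\ (mul x e w <-> w = x).

Definition is_hypergroup (H : T -> Prop) (mul : T -> T -> T -> Prop) : Prop :=
  (exists x, H x) /\
  (forall x y, H x -> H y -> (exists z, mul x y z) /\ (forall z, mul x y z -> H z)) /\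
  hg_assoc H mul /\
  exists (e : T) (inv : T -> T),
    hg_identity H mul e /\
    (forall e', hg_identity H mul e' -> e' = e) /\
    (forall h, H h -> H (inv h) /\ mul (inv h) h e /\ mul h (inv h) e) /\
    (forall h h', H h -> H h' -> mul h' h e -> mul h h' e -> h' = inv h) /\
    (forall a b c, H a -> H b -> H c -> mul a b c ->
       mul c (inv b) a /\ mul (inv a) c b).

Definition is_subhypergroup (B : T -> Prop) (mul : T -> T -> T -> Prop)
    (A : T -> Prop) : Prop :=
  (forall x, A x -> B x) /\
  (forall x y z, A x -> A y -> mul x y z -> A z) /\
  is_hypergroup A mul.

Definition lcoset (mul : T -> T -> T -> Prop) (A : T -> Prop) (b : T) : T -> Prop :=
  fun z => exists a, A a /\ mul b a z.
Definition rcoset (mul : T -> T -> T -> Prop) (A : T -> Prop) (b : T) : T -> Prop :=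
  fun z => exists a, A a /\ mul a b z.

Definition is_normal_subhypergroup (B : T -> Prop) (mul : T -> T -> T -> Prop)
    (A : T -> Prop) : Prop :=
  is_subhypergroup B mul A /\
  forall b, B b -> forall z, lcoset mul A b z <-> rcoset mul A b z.

(* Quotient B/A: carrier = the cosets bA (b in B), as subsets of T;
   (xA)(yA) = { zA : z in xA * yA }. *)
Definition quot_carrier (B : T -> Prop) (mul : T -> T -> T -> Prop)
    (A : T -> Prop) : (T -> Prop) -> Prop :=
  fun X => exists b, B b /\ X = lcoset mul A b.

Definition quot_mul (mul : T -> T -> T -> Prop) (A : T -> Prop) :
    (T -> Prop) -> (T -> Prop) -> (T -> Prop) -> Prop :=
  fun X Y Z => exists z, Z = lcoset mul A z /\
     exists u v, X u /\ Y v /\ mul u v z.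

End Hypergroups.

Definition hg_iso (T1 T2 : Type) (H1 : T1 -> Prop) (mul1 : T1 -> T1 -> T1 -> Prop)
    (H2 : T2 -> Prop) (mul2 : T2 -> T2 -> T2 -> Prop) : Prop :=
  exists f : T1 -> T2,
    (forall x, H1 x -> H2 (f x)) /\
    (forall x y, H1 x -> H1 y -> f x = f y -> x = y) /\
    (forall y, H2 y -> exists x, H1 x /\ f x = y) /\
    (forall x y, H1 x -> H1 y -> forall w,
        mul2 (f x) (f y) w <-> exists z, mul1 x y z /\ f z = w).

Section Schemes.
Variable X : finType.

Definition diag_rel : {set X * X} := [set xy | xy.1 == xy.2].
Definition transp_rel (p : {set X * X}) : {set X * X} :=
  [set xy | (xy.2, xy.1) \in p].

(* |yp ∩ zq^*| = #{ w | (y,w) in p and (w,z) in q } *)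
Definition inter_count (p q : {set X * X}) (y z : X) : nat :=
  #|[set w | ((y, w) \in p) && ((w, z) \in q)]|.

Definition is_assoc_scheme (S : {set {set X * X}}) : Prop :=
  (exists x : X, True) /\
  partition S [set: X * X] /\
  diag_rel \in S /\
  (forall p, p \in S -> transp_rel p \in S) /\
  (forall p q r, p \in S -> q \in S -> r \in S ->
     exists a : nat, forall y z, (y, z) \in r -> inter_count p q y z = a).

(* H(S): p * q = { r in S : a_pq^r >= 1 } *)
Definition HS_mul (S : {set {set X * X}}) (p q r : {set X * X}) : Prop :=
  r \in S /\ exists y z, (y, z) \in r /\ 0 < inter_count p q y z.

End Schemes.

Definition finitely_realizable (T : Type) (H : T -> Prop)
    (mul : T -> T -> T -> Prop) : Prop :=
  exists (X : finType) (S : {set {set X * X}}),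
    is_assoc_scheme S /\ hg_iso H mul (fun p => p \in S) (HS_mul S).

(* Let f realize B by an association scheme S on X.  The classes f a, a in A, form a closed
   subset of S: their union E is an equivalence relation on X (reflexive as f e is the diagonal,
   symmetric by reversibility, transitive as A is closed).  Restricting the classes in A to a
   single E-class gives a scheme realizing A.  Collapsing each E-class to a point, the double
   cosets E p E (p in S) become the relations of a quotient scheme, whose intersection numbers
   are the counts of E p E q E-paths divided by the common size of the E-classes.  Normality
   makes E (f b) E the union of the f c with c in bA, so bA |-> E (f b) E realizes B/A. *)

From mathcomp Require Import all_boot.
From Stdlib Require Import ClassicalEpsilon FunctionalExtensionality PropExtensionality.
Set Implicit Arguments. Unset Strict Implicit. Unset Printing Implicit Defensive.

Lemma card_set_sum (U : finType) (P : pred U) : #|[set w | P w]| = \sum_w P w.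
Proof. by rewrite -sum1dep_card big_mkcond; apply: eq_bigr => w _; case: (P w). Qed.

Section AssociationScheme.
Variables (X : finType) (S : {set {set X * X}}).
Hypothesis hS : is_assoc_scheme S.

Lemma sch_inhabited : exists x : X, True.
Proof. by case: hS. Qed.

Lemma sch_partition : partition S [set: X * X].
Proof. by case: hS => _ []. Qed.

Lemma sch_diag : diag_rel X \in S.
Proof. by case: hS => _ [_ []]. Qed.

Lemma sch_transp p : p \in S -> transp_rel p \in S.
Proof. by case: hS => _ [_ [_ [transpS _]]]; apply: transpS. Qed.

Lemma sch_const p q r : p \in S -> q \in S -> r \in S ->
  exists a, forall y z, (y, z) \in r -> inter_count p q y z = a.
Proof. by case: hS => _ [_ [_ [_]]]; apply. Qed.

Lemma sch_classP xy : exists2 p, p \in S & xy \in p.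
Proof.
case/and3P: sch_partition => /eqP covS _ _.
have /bigcupP[p pS xyp] : xy \in cover S by rewrite covS inE.
by exists p.
Qed.

Lemma sch_class_uniq p q xy : p \in S -> q \in S -> xy \in p -> xy \in q -> p = q.
Proof.
move=> pS qS xyp xyq; case/and3P: sch_partition => _ /trivIsetP trivS _.
apply/eqP; apply: contraTT isT => neq_pq.
by have := disjointFr (trivS p q pS qS neq_pq) xyp; rewrite xyq.
Qed.

Lemma sch_class_neq0 p : p \in S -> exists xy, xy \in p.
Proof.
move=> pS; case/and3P: sch_partition => _ _ S0.
by apply/set0Pn; apply: contraNneq S0 => <-.
Qed.

Lemma inter_count_gt0P (p q : {set X * X}) y z :
  reflect (exists w, (y, w) \in p /\ (w, z) \in q) (0 < inter_count p q y z).
Proof.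
apply: (iffP card_gt0P) => [[w] | [w [yw wz]]]; last by exists w; rewrite inE yw wz.
by rewrite inE => /andP[]; exists w.
Qed.

Lemma sch_lift p q r x y x' y' w : p \in S -> q \in S -> r \in S ->
  (x, y) \in r -> (x', y') \in r -> (x, w) \in p -> (w, y) \in q ->
  exists w', (x', w') \in p /\ (w', y') \in q.
Proof.
move=> pS qS rS xy xy' xw wy; have [a cst] := sch_const pS qS rS.
by apply/inter_count_gt0P; rewrite (cst _ _ xy') -(cst _ _ xy); apply/inter_count_gt0P; exists w.
Qed.

Lemma HS_mulI (p q r : {set X * X}) x y w :
  r \in S -> (x, y) \in r -> (x, w) \in p -> (w, y) \in q -> HS_mul S p q r.
Proof.
by move=> rS xy xw wy; split=> //; exists x, y; split=> //; apply/inter_count_gt0P; exists w.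
Qed.

Lemma HS_mulE p q r x y : p \in S -> q \in S -> HS_mul S p q r -> (x, y) \in r ->
  exists w, (x, w) \in p /\ (w, y) \in q.
Proof.
move=> pS qS [rS [x0 [y0 [xy0 /inter_count_gt0P[w [xw wy]]]]]] xy.
exact: sch_lift pS qS rS xy0 xy xw wy.
Qed.

Lemma sch_succ p x : p \in S -> exists w, (x, w) \in p.
Proof.
move=> pS; have [[x1 y1] xy1] := sch_class_neq0 pS.
have [w [xw _]] : exists w, (x, w) \in p /\ (w, x) \in transp_rel p.
  by apply: (sch_lift (y := x1) pS (sch_transp pS) sch_diag _ _ xy1); rewrite inE.
by exists w.
Qed.

Lemma sch_valency p x y : p \in S ->
  #|[set w | (x, w) \in p]| = #|[set w | (y, w) \in p]|.
Proof.
move=> pS; have [a cst] := sch_const pS (sch_transp pS) sch_diag.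
have succ_count z : #|[set w | (z, w) \in p]| = inter_count p (transp_rel p) z z.
  by apply: eq_card => w; rewrite !inE andbb.
by rewrite !succ_count !cst ?inE.
Qed.

Lemma sch_idem_diag p : p \in S -> (forall r, HS_mul S p p r -> r = p) -> p = diag_rel X.
Proof.
move=> pS idem; have [[x y] xy] := sch_class_neq0 pS.
have succ_sub : [set w | (y, w) \in p] \subset [set w | (x, w) \in p].
  apply/subsetP => w; rewrite !inE => yw; have [r rS xw] := sch_classP (x, w).
  by rewrite -(idem r) //; apply: HS_mulI rS xw xy yw.
have /subset_cardP/(_ succ_sub)/(_ y) := sch_valency y x pS.
rewrite !inE xy => yy.
by apply: sch_class_uniq pS sch_diag yy _; rewrite inE.
Qed.

Lemma sum_mem_cover (Q : {set {set X * X}}) xy : Q \subset S ->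
  \sum_(s in Q) (xy \in s) = (xy \in cover Q).
Proof.
move=> QS; case: bigcupP => [[s0 Qs0 xys0] | noQ].
  rewrite (bigD1 s0) //= xys0 big1 // => s /andP[Qs neq_s].
  apply/eqP; rewrite eqb0; apply: contra neq_s => xys; apply/eqP.
  exact: sch_class_uniq (subsetP QS _ Qs) (subsetP QS _ Qs0) xys xys0.
by rewrite big1 // => s Qs; apply/eqP; rewrite eqb0; apply: contra_notN noQ => xys; exists s.
Qed.

Lemma card_comp_cover (Q Q' : {set {set X * X}}) x y : Q \subset S -> Q' \subset S ->
  #|[set w | ((x, w) \in cover Q) && ((w, y) \in cover Q')]| =
  \sum_(s in Q) \sum_(t in Q') inter_count s t x y.
Proof.
move=> QS Q'S; rewrite card_set_sum.
under eq_bigr => w _ do rewrite -mulnb -(sum_mem_cover _ QS) -(sum_mem_cover _ Q'S) big_distrl.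
rewrite exchange_big; apply: eq_bigr => s _.
under eq_bigr => w _ do rewrite big_distrr.
rewrite exchange_big; apply: eq_bigr => t _.
by rewrite /inter_count card_set_sum; apply: eq_bigr => w _; rewrite /= mulnb.
Qed.

Lemma card_comp_cover_const (Q Q' : {set {set X * X}}) r x y x' y' :
  Q \subset S -> Q' \subset S -> r \in S -> (x, y) \in r -> (x', y') \in r ->
  #|[set w | ((x, w) \in cover Q) && ((w, y) \in cover Q')]| =
  #|[set w | ((x', w) \in cover Q) && ((w, y') \in cover Q')]|.
Proof.
move=> QS Q'S rS xy xy'; rewrite !card_comp_cover //.
apply: eq_bigr => s Qs; apply: eq_bigr => t Q't.
have [a cst] := sch_const (subsetP QS _ Qs) (subsetP Q'S _ Q't) rS.
by rewrite (cst _ _ xy) (cst _ _ xy').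
Qed.

End AssociationScheme.

Definition closed_subset (X : finType) (S P : {set {set X * X}}) : Prop :=
  [/\ P \subset S, forall x, (x, x) \in cover P,
      forall x y, (x, y) \in cover P -> (y, x) \in cover P &
      forall x y z, (x, y) \in cover P -> (y, z) \in cover P -> (x, z) \in cover P].

Section ClosedSubset.
Variables (X : finType) (S P : {set {set X * X}}).
Hypotheses (hS : is_assoc_scheme S) (hP : closed_subset S P).
Local Notation E := (cover P).

Lemma closed_sub : P \subset S.
Proof. by case: hP. Qed.

Lemma closed_refl x : (x, x) \in E.
Proof. by case: hP. Qed.

Lemma closed_sym x y : (x, y) \in E -> (y, x) \in E.
Proof. by case: hP => _ _ sym _; apply: sym. Qed.

Lemma closed_trans x y z : (x, y) \in E -> (y, z) \in E -> (x, z) \in E.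
Proof. by case: hP => _ _ _ trans; apply: trans. Qed.

Lemma closed_class p xy : p \in S -> xy \in p -> xy \in E -> p \in P.
Proof.
move=> pS xyp /bigcupP[q qP xyq].
by rewrite (sch_class_uniq hS pS (subsetP closed_sub _ qP) xyp xyq).
Qed.

Lemma closed_diag : diag_rel X \in P.
Proof.
have [x _] := sch_inhabited hS.
by apply: (closed_class (sch_diag hS) _ (closed_refl x)); rewrite inE.
Qed.

Lemma closed_transp p : p \in P -> transp_rel p \in P.
Proof.
move=> pP; have [[x y] xy] := sch_class_neq0 hS (subsetP closed_sub _ pP).
apply: (closed_class (xy := (y, x)) (sch_transp hS (subsetP closed_sub _ pP))).
  by rewrite inE.
by apply: closed_sym; apply/bigcupP; exists p.
Qed.

Section Subscheme.
Variable x0 : X.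

Definition sub_pt : finType := {y : X | (x0, y) \in E}.
Definition restr (p : {set X * X}) : {set sub_pt * sub_pt} :=
  [set yz | (val yz.1, val yz.2) \in p].
Definition sub_scheme : {set {set sub_pt * sub_pt}} := restr @: P.

Definition sub_pt0 : sub_pt := exist _ x0 (closed_refl x0).

Lemma restr_succ p : p \in P -> exists w : sub_pt, (x0, val w) \in p.
Proof.
move=> pP; have [w x0w] := sch_succ hS x0 (subsetP closed_sub _ pP).
have x0wE : (x0, w) \in E by apply/bigcupP; exists p.
by exists (exist _ w x0wE).
Qed.

Lemma restr_inj : {in P &, injective restr}.
Proof.
move=> p q pP qP eq_pq; have [w x0w] := restr_succ pP.
have : (sub_pt0, w) \in restr q by rewrite -eq_pq inE.
rewrite inE /= => x0w'.
exact: (sch_class_uniq hS (subsetP closed_sub _ pP) (subsetP closed_sub _ qP) x0w).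
Qed.

Lemma inter_count_restr p q (y z : sub_pt) : p \in P ->
  inter_count (restr p) (restr q) y z = inter_count p q (val y) (val z).
Proof.
move=> pP; rewrite /inter_count -(card_imset _ val_inj); apply: eq_card => w.
rewrite [in RHS]inE; apply/imsetP/andP => [[w']|[yw wz]].
  by rewrite !inE => /andP[yw wz] ->.
have x0w : (x0, w) \in E by apply: closed_trans (valP y) _; apply/bigcupP; exists p.
by exists (exist _ w x0w); rewrite // !inE yw wz.
Qed.

Lemma sub_scheme_assoc : is_assoc_scheme sub_scheme.
Proof.
split; first by exists sub_pt0.
split.
  apply/and3P; split.
  - apply/eqP/setP => -[y z]; rewrite inE; apply/bigcupP.
    have /bigcupP[p pP yz] := closed_trans (closed_sym (valP y)) (valP z).
    by exists (restr p); [apply: imset_f | rewrite inE].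
  - apply/trivIsetP => _ _ /imsetP[p pP ->] /imsetP[q qP ->] neq_pq.
    rewrite -setI_eq0; apply/eqP/setP => yz; rewrite !inE.
    apply/negbTE/negP => /andP[yzp yzq]; move/negP: neq_pq; apply.
    by rewrite (sch_class_uniq hS (subsetP closed_sub _ pP) (subsetP closed_sub _ qP) yzp yzq).
  - apply/negP; rewrite /sub_scheme => /imsetP[p pP p0].
    have [w x0w] := restr_succ pP.
    have : (sub_pt0, w) \in restr p by rewrite inE.
    by rewrite -p0 inE.
split.
  have -> : diag_rel sub_pt = restr (diag_rel X) by apply/setP => -[y z]; rewrite !inE val_eqE.
  exact: imset_f closed_diag.
split.
  move=> _ /imsetP[p pP ->].
  have -> : transp_rel (restr p) = restr (transp_rel p) by apply/setP => -[y z]; rewrite !inE.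
  exact/imset_f/closed_transp.
move=> _ _ _ /imsetP[p pP ->] /imsetP[q qP ->] /imsetP[r rP ->].
have [a cst] := sch_const hS (subsetP closed_sub _ pP) (subsetP closed_sub _ qP)
  (subsetP closed_sub _ rP).
by exists a => y z; rewrite inE inter_count_restr //; apply: cst.
Qed.

Lemma HS_mul_restr p q r : p \in P -> q \in P -> r \in P ->
  HS_mul sub_scheme (restr p) (restr q) (restr r) <-> HS_mul S p q r.
Proof.
move=> pP qP rP; split.
  case=> _ [y [z [yz pos]]]; split; first exact: subsetP closed_sub _ rP.
  by exists (val y), (val z); rewrite -inter_count_restr //; move: yz; rewrite inE.
move=> pqr; split; first exact: imset_f.
have [w x0w] := restr_succ rP; exists sub_pt0, w; split; first by rewrite inE.
have /inter_count_gt0P := HS_mulE hS (subsetP closed_sub _ pP) (subsetP closed_sub _ qP) pqr x0w.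
by rewrite inter_count_restr.
Qed.

End Subscheme.

Definition cls x : {set X} := [set y | (x, y) \in E].
Definition quot_pt : finType := {C : {set X} | C \in [set cls x | x in [set: X]]}.
Definition clsQ x : quot_pt := exist _ (cls x) (imset_f cls (in_setT x)).

Lemma quot_ptP (C : quot_pt) : exists x, C = clsQ x.
Proof. by case: C => C CQ; case/imsetP: (CQ) => x _ Cx; exists x; apply: val_inj. Qed.

Lemma clsQ_eq x y : (clsQ x == clsQ y) = ((x, y) \in E).
Proof.
apply/eqP/idP => [/(congr1 val) /= eq_cls | xy].
  have : y \in cls x by rewrite eq_cls inE closed_refl.
  by rewrite inE.
apply: val_inj; apply/setP => z; rewrite /= !inE.
by apply/idP/idP; apply: closed_trans; [apply: closed_sym |].
Qed.

(* [dcoset p] is the composite relation [E p E]: the union of the double coset [P p P] *)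
Definition dcoset (R : {set X * X}) : {set X * X} :=
  [set xy | [exists u, exists v, [&& (xy.1, u) \in E, (u, v) \in R & (v, xy.2) \in E]]].

Lemma dcosetP (R : {set X * X}) x y :
  reflect (exists u v, [/\ (x, u) \in E, (u, v) \in R & (v, y) \in E]) ((x, y) \in dcoset R).
Proof.
rewrite inE; apply: (iffP existsP) => [[u /existsP[v /and3P[xu uv vy]]] | [u [v [xu uv vy]]]].
  by exists u, v.
by exists u; apply/existsP; exists v; rewrite xu uv vy.
Qed.

Lemma dcoset_sat (R : {set X * X}) x x' y y' :
  (x', x) \in E -> (x, y) \in dcoset R -> (y, y') \in E -> (x', y') \in dcoset R.
Proof.
move=> x'x /dcosetP[u [v [xu uv vy]]] yy'; apply/dcosetP; exists u, v.
by split=> //; apply: closed_trans; eassumption.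
Qed.

Lemma sub_dcoset (R : {set X * X}) : R \subset dcoset R.
Proof. by apply/subsetP => -[x y] xy; apply/dcosetP; exists x, y; rewrite !closed_refl. Qed.

Lemma dcoset_sub (R R' : {set X * X}) : R \subset dcoset R' -> dcoset R \subset dcoset R'.
Proof.
move/subsetP => RR'; apply/subsetP => -[x y] /dcosetP[u [v [xu uv vy]]].
exact: dcoset_sat xu (RR' _ uv) vy.
Qed.

(* a factorisation x -a- u -p- v -b- y moves to any pair of [r] through the class of (x, v) *)
Lemma dcoset_class p r xy : p \in S -> r \in S -> xy \in r -> xy \in dcoset p ->
  r \subset dcoset p.
Proof.
case: xy => x y pS rS xy /dcosetP[u [v [/bigcupP[a aP xu] uv /bigcupP[b bP vy]]]].
have [aS bS] := (subsetP closed_sub _ aP, subsetP closed_sub _ bP).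
have [s sS xv] := sch_classP hS (x, v).
apply/subsetP => -[x' y'] xy'.
have [v' [x'v' v'y']] := sch_lift hS sS bS rS xy xy' xv vy.
have [u' [x'u' u'v']] := sch_lift hS aS pS sS xv x'v' xu uv.
by apply/dcosetP; exists u', v'; split=> //; apply/bigcupP; [exists a | exists b].
Qed.

Lemma dcoset_meet p q xy : p \in S -> q \in S -> xy \in dcoset p -> xy \in dcoset q ->
  dcoset p = dcoset q.
Proof.
wlog suff: p q / p \in S -> q \in S -> xy \in dcoset p -> xy \in dcoset q ->
    dcoset q \subset dcoset p.
  by move=> sub pS qS xyp xyq; apply/eqP; rewrite eqEsubset !sub.
case: xy => x y pS qS xyp /dcosetP[u [v [xu uv vy]]]; apply: dcoset_sub.
have uvp : (u, v) \in dcoset p by apply: dcoset_sat (closed_sym xu) xyp (closed_sym vy).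
exact: dcoset_class pS qS uv uvp.
Qed.

Lemma dcoset_diag : dcoset (diag_rel X) = E.
Proof.
apply/setP => -[x y]; apply/dcosetP/idP => [[u [v [xu /[!inE] /eqP/= <- uy]]] | xy].
  exact: closed_trans xu uy.
by exists y, y; rewrite inE closed_refl.
Qed.

Lemma dcoset_transp p x y : ((y, x) \in dcoset p) = ((x, y) \in dcoset (transp_rel p)).
Proof.
apply/dcosetP/dcosetP => -[u [v [yu uv vx]]]; exists v, u;
  by split; rewrite 1?closed_sym // inE in uv *.
Qed.

Definition quot_rel (R : {set X * X}) : {set quot_pt * quot_pt} :=
  [set CD : quot_pt * quot_pt | [exists x in val CD.1, exists y in val CD.2, (x, y) \in R]].

Lemma quot_rel_dcoset R x y : ((clsQ x, clsQ y) \in quot_rel (dcoset R)) = ((x, y) \in dcoset R).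
Proof.
rewrite inE; apply/existsP/idP => [[x' /andP[xx' /existsP[y' /andP[yy' xy']]]] | xy].
  by rewrite !inE in xx' yy'; apply: dcoset_sat xx' xy' (closed_sym yy').
exists x; rewrite /= !inE closed_refl /=.
by apply/existsP; exists y; rewrite xy andbT inE closed_refl.
Qed.

Lemma dcoset_sat_eq R x x' y y' : (x, x') \in E -> (y, y') \in E ->
  ((x, y) \in dcoset R) = ((x', y') \in dcoset R).
Proof.
move=> xx' yy'; apply/idP/idP => xy; first exact: dcoset_sat (closed_sym xx') xy yy'.
exact: dcoset_sat xx' xy (closed_sym yy').
Qed.

Lemma quot_rel_dcoset_inj R R' :
  quot_rel (dcoset R) = quot_rel (dcoset R') -> dcoset R = dcoset R'.
Proof. by move=> eqR; apply/setP => -[x y]; rewrite -!quot_rel_dcoset eqR. Qed.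

Lemma dcoset_cover p : p \in S -> dcoset p = cover [set s in S | s \subset dcoset p].
Proof.
move=> pS; apply/setP => xy; apply/idP/bigcupP => [xyp | [s]].
  have [s sS xys] := sch_classP hS xy.
  by exists s; rewrite // inE sS (dcoset_class pS sS xys xyp).
by rewrite inE => /andP[_ /subsetP]; apply.
Qed.

Lemma card_cls x y : #|cls x| = #|cls y|.
Proof.
have clsE z : cls z = [set w | ((z, w) \in E) && ((w, z) \in cover S)].
  by apply/setP => w; rewrite !inE (cover_partition (sch_partition hS)) in_setT andbT.
by rewrite !clsE; apply: (card_comp_cover_const hS closed_sub _ (sch_diag hS)); rewrite ?inE.
Qed.

Lemma card_dcoset_comp_const p q r x y x' y' : p \in S -> q \in S -> r \in S ->
  (x, y) \in dcoset r -> (x', y') \in dcoset r ->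
  #|[set w | ((x, w) \in dcoset p) && ((w, y) \in dcoset q)]| =
  #|[set w | ((x', w) \in dcoset p) && ((w, y') \in dcoset q)]|.
Proof.
have class_sub (s : {set X * X}) : [set t in S | t \subset s] \subset S.
  by rewrite setIdE subsetIl.
have sat u v x1 y1 : (x1, u) \in E -> (v, y1) \in E ->
    #|[set w | ((x1, w) \in dcoset p) && ((w, y1) \in dcoset q)]| =
    #|[set w | ((u, w) \in dcoset p) && ((w, v) \in dcoset q)]|.
  move=> x1u vy1; apply: eq_card => w; rewrite in_set [in RHS]in_set.
  rewrite (dcoset_sat_eq _ x1u (closed_refl w)).
  by rewrite (dcoset_sat_eq _ (closed_refl w) (closed_sym vy1)).
move=> pS qS rS /dcosetP[u [v [xu uv vy]]] /dcosetP[u' [v' [xu' uv' vy']]].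
rewrite (sat _ _ _ _ xu vy) (sat _ _ _ _ xu' vy') (dcoset_cover pS) (dcoset_cover qS).
exact (card_comp_cover_const hS (class_sub _) (class_sub _) rS uv uv').
Qed.

Lemma card_dcoset_comp p q x y :
  #|[set w | ((x, w) \in dcoset p) && ((w, y) \in dcoset q)]| =
  #|cls x| * inter_count (quot_rel (dcoset p)) (quot_rel (dcoset q)) (clsQ x) (clsQ y).
Proof.
rewrite /inter_count [LHS]card_set_sum [in RHS]card_set_sum big_distrr /=.
rewrite (partition_big clsQ xpredT) //=; apply: eq_bigr => W _; have [z ->] := quot_ptP W.
rewrite !quot_rel_dcoset.
transitivity (\sum_(w | clsQ w == clsQ z) (((x, z) \in dcoset p) && ((z, y) \in dcoset q) : nat)).
  apply: eq_bigr => w; rewrite clsQ_eq => wz.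
  by rewrite (dcoset_sat_eq _ (closed_refl x) wz) (dcoset_sat_eq _ wz (closed_refl y)).
rewrite sum_nat_cond_const (card_cls x z); congr (_ * _); apply: eq_card => w.
by rewrite !inE clsQ_eq; apply/idP/idP; apply: closed_sym.
Qed.

Definition quot_scheme : {set {set quot_pt * quot_pt}} := [set quot_rel (dcoset p) | p in S].

Lemma quot_scheme_partition : partition quot_scheme [set: quot_pt * quot_pt].
Proof.
apply/and3P; split.
- apply/eqP/setP => -[C D]; rewrite in_setT; apply/bigcupP.
  have [x ->] := quot_ptP C; have [y ->] := quot_ptP D.
  have [p pS xy] := sch_classP hS (x, y).
  exists (quot_rel (dcoset p)); first exact: imset_f.
  by rewrite quot_rel_dcoset (subsetP (sub_dcoset p)).
- apply/trivIsetP => _ _ /imsetP[p pS ->] /imsetP[q qS ->]; apply: contraR.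
  rewrite -setI_eq0 => /set0Pn[[C D]]; rewrite inE.
  have [x ->] := quot_ptP C; have [y ->] := quot_ptP D.
  by rewrite !quot_rel_dcoset => /andP[xyp xyq]; rewrite (dcoset_meet pS qS xyp xyq).
- apply/negP; rewrite /quot_scheme => /imsetP[p pS p0].
  have [[x y] xy] := sch_class_neq0 hS pS.
  have : (clsQ x, clsQ y) \in quot_rel (dcoset p).
    by rewrite quot_rel_dcoset (subsetP (sub_dcoset p)).
  by rewrite -p0 inE.
Qed.

Lemma quot_scheme_assoc : is_assoc_scheme quot_scheme.
Proof.
split; first by have [x _] := sch_inhabited hS; exists (clsQ x).
split; first exact: quot_scheme_partition.
split.
  have -> : diag_rel quot_pt = quot_rel (dcoset (diag_rel X)).
    apply/setP => -[C D]; have [x ->] := quot_ptP C; have [y ->] := quot_ptP D.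
    by rewrite quot_rel_dcoset dcoset_diag -clsQ_eq inE.
  exact: imset_f (sch_diag hS).
split.
  move=> _ /imsetP[p pS ->].
  have -> : transp_rel (quot_rel (dcoset p)) = quot_rel (dcoset (transp_rel p)).
    apply/setP => -[C D]; have [x ->] := quot_ptP C; have [y ->] := quot_ptP D.
    by rewrite inE /= !quot_rel_dcoset dcoset_transp.
  exact/imset_f/sch_transp.
move=> _ _ _ /imsetP[p pS ->] /imsetP[q qS ->] /imsetP[r rS ->].
have [[x0 y0] xy0] := sch_class_neq0 hS rS.
exists (inter_count (quot_rel (dcoset p)) (quot_rel (dcoset q)) (clsQ x0) (clsQ y0)) => C D.
have [x ->] := quot_ptP C; have [y ->] := quot_ptP D; rewrite quot_rel_dcoset => xy.
have cls_gt0 : 0 < #|cls x| by apply/card_gt0P; exists x; rewrite inE closed_refl.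
apply/eqP; rewrite -(eqn_pmul2l cls_gt0) -card_dcoset_comp (card_cls x x0) -card_dcoset_comp.
by apply/eqP; apply: card_dcoset_comp_const pS qS rS xy (subsetP (sub_dcoset r) _ xy0).
Qed.

Lemma HS_mul_quot p q r : r \in S ->
  HS_mul quot_scheme (quot_rel (dcoset p)) (quot_rel (dcoset q)) (quot_rel (dcoset r)) <->
  exists x w y, [/\ (x, w) \in dcoset p, (w, y) \in dcoset q & (x, y) \in dcoset r].
Proof.
move=> rS; split => [[_ [C [D [CD /inter_count_gt0P[V [CV VD]]]]]] | [x [w [y [xw wy xy]]]]].
  move: CD CV VD; have [x ->] := quot_ptP C; have [w ->] := quot_ptP V.
  have [y ->] := quot_ptP D; rewrite !quot_rel_dcoset => xy xw wy.
  by exists x, w, y.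
split; first exact: imset_f.
exists (clsQ x), (clsQ y); rewrite quot_rel_dcoset; split => //.
by apply/inter_count_gt0P; exists (clsQ w); rewrite !quot_rel_dcoset.
Qed.

End ClosedSubset.

Definition propb (P : Prop) : bool := if excluded_middle_informative P then true else false.

Lemma propbP (P : Prop) : reflect P (propb P).
Proof. by rewrite /propb; case: excluded_middle_informative => h; constructor. Qed.

Section Realization.
Variables (T : Type) (B : T -> Prop) (mul : T -> T -> T -> Prop) (A : T -> Prop).
Variables (e : T) (inv : T -> T) (eA : T) (invA : T -> T).
Hypothesis mulB : forall x y z, B x -> B y -> mul x y z -> B z.
Hypothesis assocB : hg_assoc B mul.
Hypothesis idB : hg_identity B mul e.
Hypothesis invB : forall h, B h -> B (inv h) /\ mul (inv h) h e /\ mul h (inv h) e.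
Hypothesis inv_uniqB : forall h h', B h -> B h' -> mul h' h e -> mul h h' e -> h' = inv h.
Hypothesis reversibleB : forall a b c, B a -> B b -> B c -> mul a b c ->
  mul c (inv b) a /\ mul (inv a) c b.
Hypothesis subAB : forall x, A x -> B x.
Hypothesis mulA : forall x y z, A x -> A y -> mul x y z -> A z.
Hypothesis idA : hg_identity A mul eA.
Hypothesis invA_spec : forall h, A h -> A (invA h) /\ mul (invA h) h eA /\ mul h (invA h) eA.
Hypothesis normalA : forall b, B b -> forall z, lcoset mul A b z <-> rcoset mul A b z.

Variables (X : finType) (S : {set {set X * X}}) (f : T -> {set X * X}).
Hypothesis hS : is_assoc_scheme S.
Hypothesis fS : forall x, B x -> f x \in S.
Hypothesis f_inj : forall x y, B x -> B y -> f x = f y -> x = y.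
Hypothesis f_surj : forall p, p \in S -> exists x, B x /\ f x = p.
Hypothesis f_mul : forall x y, B x -> B y -> forall w,
  HS_mul S (f x) (f y) w <-> exists z, mul x y z /\ f z = w.

Lemma f_classP xy : exists2 c, B c & xy \in f c.
Proof.
have [p pS xyp] := sch_classP hS xy; have [c [Bc fc]] := f_surj pS.
by exists c; rewrite ?fc.
Qed.

Lemma f_HS_mulI x y c : B x -> B y -> mul x y c -> HS_mul S (f x) (f y) (f c).
Proof. by move=> Bx By xyc; apply/f_mul => //; exists c. Qed.

Lemma f_HS_mulE x y c : B x -> B y -> B c -> HS_mul S (f x) (f y) (f c) -> mul x y c.
Proof.
move=> Bx By Bc /f_mul[] // z [xyz fz].
by rewrite -(f_inj (mulB Bx By xyz) Bc fz).
Qed.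

Lemma f_comp c1 c2 u v w : B c1 -> B c2 -> (u, v) \in f c1 -> (v, w) \in f c2 ->
  exists c, mul c1 c2 c /\ (u, w) \in f c.
Proof.
move=> Bc1 Bc2 uv vw; have [c Bc uw] := f_classP (u, w).
by exists c; split=> //; apply: f_HS_mulE => //; apply: HS_mulI (fS Bc) uw uv vw.
Qed.

Lemma f_decomp x y c u w : B x -> B y -> mul x y c -> (u, w) \in f c ->
  exists v, (u, v) \in f x /\ (v, w) \in f y.
Proof. move=> Bx By xyc uw; exact (HS_mulE hS (fS Bx) (fS By) (f_HS_mulI Bx By xyc) uw). Qed.

Lemma f_idem_diag x : B x -> (forall c, B c -> mul x x c -> c = x) -> f x = diag_rel X.
Proof.
move=> Bx idem; apply: (sch_idem_diag hS (fS Bx)) => r xxr.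
have [c [Bc fc]] := f_surj xxr.1; rewrite -fc in xxr *.
by congr f; apply: idem => //; apply: f_HS_mulE xxr.
Qed.

Lemma BeA : B eA.
Proof. by case: idA => /subAB. Qed.

Lemma f_e : f e = diag_rel X.
Proof. have [Be e_id] := idB; apply: (f_idem_diag Be) => c _; exact: (e_id e Be c).1.1. Qed.

Lemma eA_e : eA = e.
Proof.
have [AeA eA_id] := idA; have [Be _] := idB; apply: f_inj BeA Be _.
by rewrite f_e; apply: (f_idem_diag BeA) => c _; apply: (eA_id eA AeA c).1.1.
Qed.

Lemma A_e : A e.
Proof. by rewrite -eA_e; case: idA. Qed.

Lemma A_inv a : A a -> A (inv a).
Proof.
move=> Aa; have [AinvA [inv_a a_inv]] := invA_spec Aa.
by rewrite -(inv_uniqB (subAB Aa) (subAB AinvA)) -?eA_e.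
Qed.

Definition A_classes : {set {set X * X}} := [set p in S | propb (exists2 a, A a & f a = p)].

Lemma A_classesP p : reflect (exists2 a, A a & f a = p) (p \in A_classes).
Proof.
rewrite inE; apply: (iffP idP) => [/andP[_ /propbP //] | [a Aa fa]].
by rewrite -fa (fS (subAB Aa)); apply/propbP; exists a.
Qed.

Lemma A_coverP xy : reflect (exists2 a, A a & xy \in f a) (xy \in cover A_classes).
Proof.
apply: (iffP bigcupP) => [[p /A_classesP[a Aa <-]] | [a Aa xya]]; first by exists a.
by exists (f a) => //; apply/A_classesP; exists a.
Qed.

Lemma A_classes_f a : A a -> f a \in A_classes.
Proof. by move=> Aa; apply/A_classesP; exists a. Qed.

Lemma A_classes_closed : closed_subset S A_classes.
Proof.
have [Be e_id] := idB; split.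
- by rewrite /A_classes setIdE subsetIl.
- by move=> x; apply/A_coverP; exists e; rewrite ?f_e ?inE //; apply: A_e.
- move=> x y /A_coverP[a Aa xy]; have [b Bb yx] := f_classP (y, x).
  have abe : mul a b e.
    apply: f_HS_mulE (subAB Aa) Bb Be _; rewrite f_e.
    by apply: HS_mulI (sch_diag hS) _ xy yx; rewrite inE.
  have [_ inva_e_b] := reversibleB (subAB Aa) Bb Be abe.
  have b_inva : b = inv a by apply: (e_id _ (invB (subAB Aa)).1 b).2.1.
  by apply/A_coverP; exists b; rewrite // b_inva; apply: A_inv.
- move=> x y z /A_coverP[a Aa xy] /A_coverP[a' Aa' yz].
  have [c [aa'c xz]] := f_comp (subAB Aa) (subAB Aa') xy yz.
  by apply/A_coverP; exists c; first exact: mulA Aa Aa' aa'c.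
Qed.

Lemma lcoset_B b c : B b -> lcoset mul A b c -> B c.
Proof. by move=> Bb [a [Aa bac]]; apply: mulB Bb (subAB Aa) bac. Qed.

Lemma lcoset_trans b c z : B b -> lcoset mul A b c -> lcoset mul A c z -> lcoset mul A b z.
Proof.
move=> Bb [a [Aa bac]] [a' [Aa' ca'z]].
have [v [aa'v bvz]] := (assocB Bb (subAB Aa) (subAB Aa') z).1 (ex_intro _ c (conj bac ca'z)).
by exists v; split; first exact: mulA Aa Aa' aa'v.
Qed.

Lemma lcoset_sym b c : B b -> lcoset mul A b c -> lcoset mul A c b.
Proof.
move=> Bb [a [Aa bac]]; have [cinvab _] := reversibleB Bb (subAB Aa) (mulB Bb (subAB Aa) bac) bac.
by exists (inv a); split; first exact: A_inv.
Qed.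

Lemma lcoset_eq b c : B b -> lcoset mul A b c -> lcoset mul A b = lcoset mul A c.
Proof.
move=> Bb bc; apply: functional_extensionality => z; apply: propositional_extensionality.
split; last exact: lcoset_trans.
exact: lcoset_trans (lcoset_B Bb bc) (lcoset_sym Bb bc).
Qed.

Local Notation dcosetA := (dcoset A_classes).
Local Notation quot_relA := (quot_rel A_classes).

(* normality turns [A b A] into the single coset [b A] *)
Lemma dcoset_fP b x y : B b ->
  (x, y) \in dcosetA (f b) <-> exists2 c, lcoset mul A b c & (x, y) \in f c.
Proof.
move=> Bb; split=> [|[c [a [Aa bac]] xy]]; last first.
  have [w [xw wy]] := f_decomp Bb (subAB Aa) bac xy.
  apply/dcosetP; exists x, w; split=> //; first exact: closed_refl A_classes_closed x.
  by apply/A_coverP; exists a.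
case/dcosetP=> u [v [/A_coverP[a1 Aa1 xu] uv /A_coverP[a2 Aa2 vy]]].
have [d [a1bd xv]] := f_comp (subAB Aa1) Bb xu uv.
have [c [da2c xy]] := f_comp (mulB (subAB Aa1) Bb a1bd) (subAB Aa2) xv vy.
have [a3 [Aa3 ba3d]] := (normalA Bb d).2 (ex_intro _ a1 (conj Aa1 a1bd)).
have [v' [a3a2v' bv'c]] :=
  (assocB Bb (subAB Aa3) (subAB Aa2) c).1 (ex_intro _ d (conj ba3d da2c)).
by exists c => //; exists v'; split; first exact: mulA Aa3 Aa2 a3a2v'.
Qed.

Definition coset_rel (C : T -> Prop) : {set X * X} :=
  [set xy | propb (exists2 c, C c & xy \in f c)].

Lemma coset_rel_lcoset b : B b -> coset_rel (lcoset mul A b) = dcosetA (f b).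
Proof.
by move=> Bb; apply/setP => -[x y]; rewrite inE; apply/propbP/idP => /(dcoset_fP _ _ Bb).
Qed.

Lemma lcoset_inj b b' : B b -> B b' -> dcosetA (f b) = dcosetA (f b') ->
  lcoset mul A b = lcoset mul A b'.
Proof.
move=> Bb Bb' eq_bb'; have [xy xyb] := sch_class_neq0 hS (fS Bb).
have := subsetP (sub_dcoset A_classes_closed (f b)) _ xyb; rewrite eq_bb'; case: xy xyb => x y xyb.
case/(dcoset_fP _ _ Bb') => c b'c xyc; have Bc := lcoset_B Bb' b'c.
have bc : b = c by apply: f_inj Bb Bc (sch_class_uniq hS (fS Bb) (fS Bc) xyb xyc).
by rewrite (lcoset_eq Bb' b'c) bc.
Qed.

Lemma realizable_sub : finitely_realizable A mul.
Proof.
have [x0 _] := sch_inhabited hS; have hP := A_classes_closed.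
exists (sub_pt A_classes x0), (sub_scheme A_classes x0).
split; first exact: sub_scheme_assoc hS hP x0.
exists (fun a => restr A_classes x0 (f a)); split; [|split; [|split]].
- by move=> a Aa; apply/imset_f/A_classes_f.
- move=> a a' Aa Aa' /(restr_inj hS hP (A_classes_f Aa) (A_classes_f Aa')).
  exact: f_inj (subAB Aa) (subAB Aa').
- by move=> _ /imsetP[_ /A_classesP[a Aa <-] ->]; exists a.
move=> x y Ax Ay W; split => [xyW | [z [xyz <-]]].
  have [/imsetP[_ /A_classesP[c Ac <-] W_c] _] := xyW; rewrite W_c in xyW.
  exists c; split=> //; apply: f_HS_mulE (subAB Ax) (subAB Ay) (subAB Ac) _.
  exact: (HS_mul_restr hS hP x0 (A_classes_f Ax) (A_classes_f Ay) (A_classes_f Ac)).1 xyW.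
have Az := mulA Ax Ay xyz.
apply/(HS_mul_restr hS hP x0 (A_classes_f Ax) (A_classes_f Ay) (A_classes_f Az)).
exact: f_HS_mulI (subAB Ax) (subAB Ay) xyz.
Qed.

Lemma HS_mul_quot_coset b1 b2 W : B b1 -> B b2 ->
  HS_mul (quot_scheme S A_classes) (quot_relA (dcosetA (f b1))) (quot_relA (dcosetA (f b2))) W <->
  exists Z, quot_mul mul A (lcoset mul A b1) (lcoset mul A b2) Z /\ quot_relA (coset_rel Z) = W.
Proof.
move=> Bb1 Bb2; have hP := A_classes_closed.
split=> [prod | [_ [[z [-> [u [v [b1u [b2v uvz]]]]]] <-]]].
  have [/imsetP[p pS W_p] _] := prod; have [c0 [Bc0 fc0]] := f_surj pS.
  move: prod; rewrite W_p -fc0 => /(HS_mul_quot hP _ _ (fS Bc0))[x [w [y [xw wy xy]]]].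
  have [c1 b1c1 xw1] := (dcoset_fP _ _ Bb1).1 xw.
  have [c2 b2c2 wy2] := (dcoset_fP _ _ Bb2).1 wy.
  have [Bc1 Bc2] := (lcoset_B Bb1 b1c1, lcoset_B Bb2 b2c2).
  have [c [c12c xyc]] := f_comp Bc1 Bc2 xw1 wy2; have Bc := mulB Bc1 Bc2 c12c.
  exists (lcoset mul A c); split; first by exists c; split=> //; exists c1, c2.
  rewrite coset_rel_lcoset //; congr quot_rel.
  exact (dcoset_meet hS hP (fS Bc) (fS Bc0) (subsetP (sub_dcoset hP _) _ xyc) xy).
have [Bu Bv] := (lcoset_B Bb1 b1u, lcoset_B Bb2 b2v); have Bz := mulB Bu Bv uvz.
rewrite coset_rel_lcoset //; apply/(HS_mul_quot hP _ _ (fS Bz)).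
have [[x y] xy] := sch_class_neq0 hS (fS Bz); have [w [xw wy]] := f_decomp Bu Bv uvz xy.
exists x, w, y; split; last exact: subsetP (sub_dcoset hP _) _ xy.
  by apply/(dcoset_fP _ _ Bb1); exists u.
by apply/(dcoset_fP _ _ Bb2); exists v.
Qed.

Lemma realizable_quot : finitely_realizable (quot_carrier B mul A) (quot_mul mul A).
Proof.
have hP := A_classes_closed.
exists (quot_pt A_classes), (quot_scheme S A_classes); split; first exact: quot_scheme_assoc hS hP.
exists (fun C => quot_relA (coset_rel C)); split; [|split; [|split]].
- by move=> _ [b [Bb ->]]; rewrite coset_rel_lcoset //; apply/imset_f/fS.
- move=> _ _ [b1 [Bb1 ->]] [b2 [Bb2 ->]]; rewrite !coset_rel_lcoset //.
  by move/(quot_rel_dcoset_inj hP); apply: lcoset_inj.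
- move=> _ /imsetP[p pS ->]; have [b [Bb <-]] := f_surj pS.
  by exists (lcoset mul A b); rewrite coset_rel_lcoset //; split=> //; exists b.
move=> _ _ [b1 [Bb1 ->]] [b2 [Bb2 ->]] W; rewrite !coset_rel_lcoset //.
exact: HS_mul_quot_coset.
Qed.

End Realization.

Theorem proposition4p9 (T : Type) (B : T -> Prop) (mul : T -> T -> T -> Prop)
    (A : T -> Prop) :
  is_hypergroup B mul ->
  finitely_realizable B mul ->
  is_normal_subhypergroup B mul A ->
  finitely_realizable A mul /\
  finitely_realizable (quot_carrier B mul A) (quot_mul mul A).
Proof.
move=> [_ [closedB [assocB [e [inv [idB [_ [invB [inv_uniqB revB]]]]]]]]].
move=> [X [S [hS [f [fS [f_inj [f_surj f_mul]]]]]]].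
move=> [[subAB [mulA [_ [_ [_ [eA [invA [idA [_ [invA_spec _]]]]]]]]]] normalA].
have mulB x y z : B x -> B y -> mul x y z -> B z by move=> Bx By; apply: (closedB x y Bx By).2.
split.
  exact (realizable_sub mulB idB invB inv_uniqB revB subAB mulA idA invA_spec
    hS fS f_inj f_surj f_mul).
exact (realizable_quot mulB assocB idB invB inv_uniqB revB subAB mulA idA invA_spec normalA
  hS fS f_inj f_surj f_mul).
Qed.
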